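(* Let $B\in\mathbb{Z}^{n\times m}$, $C\in\mathbb{Z}^{m\times n}$ and the box $\mathcal{D}$ be as in the context, and suppose now that $J_2=\mathrm{diag}(a_1,\dots,a_n)$ and $J_4=\mathrm{diag}(b_1,\dots,b_n)$ are uncertain diagonal matrices with $a_i\in[a_i^-,a_i^+]$, $b_i\in[b_i^-,b_i^+]$ (finite intervals); let $\mathcal{J}$ denote the set of admissible pairs $(J_2,J_4)$. Assume (A1) holds and (A2) holds for every $(J_2,J_4)\in\mathcal{J}$. Define $\Psi^-(\kappa)=\min_{\Delta\in\mathcal{D},(J_2,J_4)\in\mathcal{J}}\det[-(B\Delta C+\kappa^2J_2+\kappa^4J_4)]$ and $\Psi^+(\kappa)=\max_{\Delta\in\mathcal{D},(J_2,J_4)\in\mathcal{J}}\det[-(B\Delta C+\kappa^2J_2+\kappa^4J_4)]$. Then: (i) if the system exhibits microphase separation for some $(\Delta,J_2,J_4)\in\mathcal{D}\times\mathcal{J}$, then $\Psi^+$ is initially positive; (ii) if either $\Psi^-$ or $\Psi^+$ is initially positive and has a negative sign change, then the system exhibits microphase separation for some $(\Delta,J_2,J_4)\in\mathcal{D}\times\mathcal{J}$; (iii) if $\Psi^-$ is initially positive and $\Psi^+$ has a negative sign change, then the system exhibits microphase separation for every $(\Delta,J_2,J_4)\in\mathcal{D}\times\mathcal{J}$; (iv) for each $\kappa\ge0$, $\Psi^-(\kappa)$ and $\Psi^+(\kappa)$ equal respectively the minimum and maximum of $\det[-(B\Delta C+\kappa^2J_2+\kappa^4J_4)]$ over the finitely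 many vertices of the box $\mathcal{D}\times\mathcal{J}$ (all $\Delta_j\in\{\Delta_j^-,\Delta_j^+\}$, $a_i\in\{a_i^-,a_i^+\}$, $b_i\in\{b_i^-,b_i^+\}$).
   Context: Let $n,m\ge 1$. Given bounds $0\le \Delta_j^-\le \Delta_j^+<\infty$ ($j=1,\dots,m$), $\mathcal{D}$ is the set of diagonal matrices $\Delta=\mathrm{diag}(\Delta_1,\dots,\Delta_m)$ with $\Delta_j^-\le\Delta_j\le\Delta_j^+$. Assumption (A1): for every $\Delta\in\mathcal{D}$, $B\Delta C$ is singular and has $n-1$ eigenvalues (with multiplicity) with negative real part, and there is a nonzero $v\ge0$ with $v^\top B=0$. Assumption (A2) for a pair $(J_2,J_4)$ of symmetric matrices: $J_2$ is indefinite, $J_4$ is negative semidefinite, and there exists $\bar\kappa$ with $\bar\kappa^2J_2+\bar\kappa^4J_4$ negative definite. For real $\kappa\ge0$ let $\rho(\Delta,J_2,J_4,\kappa)$ be the spectral abscissa (maximum real part of eigenvalues) of $B\Delta C+\kappa^2J_2+\kappa^4J_4$. A continuous function $f$ on $[0,\infty)$ is initially positive if there is $\hat\kappa>0$ with $f>0$ on $(0,\hat\kappa)$; it has a negative sign change if $f(\kappa_1)>0>f(\kappa_2)$ for some $\kappa_1<\kappa_2$. The system exhibits microphase separation for $(\Delta,J_2,J_4)$ if there is $\hat\kappa>0$ with $\rho(\Delta,J_2,J_4,\kappa)<0$ for all $\kappa\in(0,\hat\kappa)$ and there are $\hat\kappa<\kappa_1<\kappa_2$ with $\rho(\Delta,J_2,J_4,\kappa_1)>0$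 and $\rho(\Delta,J_2,J_4,\kappa_2)<0$. *)

From HB Require Import structures.
From mathcomp Require Import all_boot all_order all_algebra.
From mathcomp Require Import closed_field complex.
From mathcomp Require Import classical_sets reals.

Set Implicit Arguments.
Unset Strict Implicit.
Unset Printing Implicit Defensive.

Import Order.TTheory GRing.Theory Num.Theory.
Local Open Scope ring_scope.

Section Defs.
Variable R : realType.

Definition intmx (p q : nat) (A : 'M[int]_(p, q)) : 'M[R]_(p, q) :=
  map_mx (fun z : int => z%:~R) A.

Definition eigs (n : nat) (A : 'M[R]_n) : seq (R[i]) :=
  sval (closed_field_poly_normal
          (map_poly (fun x : R => x%:C%C) (char_poly A))).

Definition spectral_abscissa (n : nat) (A : 'M[R]_n) : R :=
  let s := eigs A in
  \big[Num.max/complex.Re (head 0 s)]_(z <- s) complex.Re z.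

Definition qform (n : nat) (J : 'M[R]_n) (x : 'cV[R]_n) : R :=
  (x^T *m J *m x) ord0 ord0.

Definition indefinite (n : nat) (J : 'M[R]_n) : Prop :=
  (exists x, 0 < qform J x) /\ (exists y, qform J y < 0).

Definition neg_semidef (n : nat) (J : 'M[R]_n) : Prop :=
  forall x, qform J x <= 0.

Definition neg_def (n : nat) (J : 'M[R]_n) : Prop :=
  forall x, x != 0 -> qform J x < 0.

Definition A2 (n : nat) (J2 J4 : 'M[R]_n) : Prop :=
  [/\ J2^T = J2, J4^T = J4, indefinite J2, neg_semidef J4 &
      exists kb : R, neg_def (kb ^+ 2 *: J2 + kb ^+ 4 *: J4)].

Definition in_box (p : nat) (lo hi d : 'rV[R]_p) : Prop :=
  forall j, lo ord0 j <= d ord0 j <= hi ord0 j.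

Definition vertex (p : nat) (lo hi : 'rV[R]_p) (s : {ffun 'I_p -> bool}) :
  'rV[R]_p := \row_j (if s j then hi ord0 j else lo ord0 j).

Definition sysmx (n m : nat) (B : 'M[int]_(n, m)) (C : 'M[int]_(m, n))
    (d : 'rV[R]_m) (a b : 'rV[R]_n) (k : R) : 'M[R]_n :=
  intmx B *m diag_mx d *m intmx C + k ^+ 2 *: diag_mx a + k ^+ 4 *: diag_mx b.

Definition rho n m B C d a b k : R :=
  spectral_abscissa (@sysmx n m B C d a b k).

Definition microphase n m B C d a b : Prop :=
  exists kh : R, 0 < kh /\
    (forall k, 0 < k < kh -> @rho n m B C d a b k < 0) /\
    exists k1 k2, [/\ kh < k1, k1 < k2,
                      @rho n m B C d a b k1 > 0 & @rho n m B C d a b k2 < 0].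

Definition initially_positive (f : R -> R) : Prop :=
  exists kh : R, 0 < kh /\ forall k, 0 < k < kh -> 0 < f k.

Definition neg_sign_change (f : R -> R) : Prop :=
  exists k1 k2 : R, [/\ 0 <= k1, k1 < k2, 0 < f k1 & f k2 < 0].

Definition det_values n m B C (dlo dhi : 'rV[R]_m) (alo ahi blo bhi : 'rV[R]_n)
    (k : R) : set R :=
  fun x => exists d a b, [/\ in_box dlo dhi d, in_box alo ahi a,
                             in_box blo bhi b &
                             x = \det (- @sysmx n m B C d a b k)].

Definition Psi_minus n m B C dlo dhi alo ahi blo bhi (k : R) : R :=
  inf (@det_values n m B C dlo dhi alo ahi blo bhi k).

Definition Psi_plus n m B C dlo dhi alo ahi blo bhi (k : R) : R :=
  sup (@det_values n m B C dlo dhi alo ahi blo bhi k).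

End Defs.

(* Write M(k) = B Delta C + k^2 J2 + k^4 J4 and p(k) = det (- M(k)), the constant
   coefficient of the characteristic polynomial of M(k).  If rho(k) < 0 then p(k) > 0, and
   if p(k) < 0 this monic real polynomial has a positive root, so rho(k) > 0.  By (A2),
   M(k) is negative definite, hence stable, for arbitrarily large k.  By (A1), 0 is a
   simple eigenvalue of B Delta C and all the others are stable, so for small k > 0 at most
   one eigenvalue of M(k) lies in the closed right half-plane; being alone it is real,
   and then p(k) <= 0.  Hence microphase separation holds for (Delta, J2, J4) as soon as
   p is initially positive and negative somewhere.  Since Delta, J2 and J4 enter M(k)
   through rank-one terms, p is affine in each coordinate of the box, so Psi^- and Psi^+
   are attained at its vertices (iv), and (i)-(iii) follow; for Psi^+ in (ii) one uses
   that the finitely many vertex determinants, polynomials in k, have constant signs on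
   a common interval (0, h). *)

From HB Require Import structures.
From mathcomp Require Import all_boot all_order all_algebra.
From mathcomp Require Import closed_field complex.
From mathcomp Require Import classical_sets reals.
From mathcomp Require Import polyrcf ring lra.
Import Order.TTheory GRing.Theory Num.Theory Normc.
Local Open Scope ring_scope.

Set Implicit Arguments.
Unset Strict Implicit.
Unset Printing Implicit Defensive.

Section ComplexModulus.
Variable R : rcfType.
Implicit Types x y z : R[i].

Lemma normc_ge0 z : 0 <= normc z.
Proof. by case: z => a b; apply: sqrtr_ge0. Qed.

Lemma normc_real (a : R) : normc a%:C%C = `|a|.
Proof. by rewrite /normc /= expr0n addr0 sqrtr_sqr. Qed.

Lemma Re_le_normc z : complex.Re z <= normc z.
Proof.
case: z => a b; rewrite (le_trans (ler_norm a)) // -sqrtr_sqr ler_sqrt ?addr_ge0 ?sqr_ge0 //.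
by rewrite lerDl sqr_ge0.
Qed.

Lemma normcB x y : normc (x - y) <= normc x + normc y.
Proof. by rewrite (le_trans (le_normcD _ _)) // normcN. Qed.

Lemma normc_sum (I : Type) (s : seq I) (F : I -> R[i]) :
  normc (\sum_(i <- s) F i) <= \sum_(i <- s) normc (F i).
Proof.
elim: s => [|i s IH]; first by rewrite !big_nil normc0.
by rewrite !big_cons (le_trans (le_normcD _ _)) // lerD2l.
Qed.

Lemma normc_prod (I : Type) (s : seq I) (F : I -> R[i]) :
  normc (\prod_(i <- s) F i) = \prod_(i <- s) normc (F i).
Proof. exact: (big_morph _ (@normcM R) (normc1 R)). Qed.

Lemma normcX z k : normc (z ^+ k) = normc z ^+ k.
Proof. by elim: k => [|k IH]; rewrite ?normc1 // !exprS normcM IH. Qed.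

End ComplexModulus.

Lemma monic_horner0_gt0 (R : rcfType) (p : {poly R}) : p \is monic ->
  (forall x, 0 <= x -> ~~ root p x) -> 0 < p.[0].
Proof.
move=> /monicP p_monic no_root; rewrite -sgr_cp0; apply/eqP.
rewrite (@sgp_pinftyP R 0 p) ?in_itv /= ?lexx //; first by rewrite /sgp_pinfty p_monic sgr1.
by move=> x; rewrite in_itv /= andbT; apply: no_root.
Qed.

Section Eigenvalues.
Variables (R : realType) (n : nat).
Implicit Types M : 'M[R]_n.

Definition char_polyC M : {poly R[i]} := map_poly (real_complex R) (char_poly M).

Lemma char_polyCE M : char_polyC M = \prod_(z <- eigs M) ('X - z%:P).
Proof.
rewrite /eigs /char_polyC; case: closed_field_poly_normal => s /= ->.
by rewrite (lead_coef_map (real_complex R)) (monicP (char_poly_monic M)) rmorph1 scale1r.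
Qed.

Lemma mem_eigs M z : (z \in eigs M) = root (char_polyC M) z.
Proof. by rewrite char_polyCE root_prod_XsubC. Qed.

Lemma size_char_polyC M : size (char_polyC M) = n.+1.
Proof. by rewrite size_map_poly size_char_poly. Qed.

Lemma coef_char_polyC M i : (char_polyC M)`_i = ((char_poly M)`_i)%:C%C.
Proof. exact: coef_map. Qed.

Lemma size_eigs M : size (eigs M) = n.
Proof.
have := congr1 (fun p : {poly R[i]} => size p) (char_polyCE M).
by rewrite /= size_prod_XsubC size_char_polyC => -[].
Qed.

Lemma real_root_eigs M (x : R) : root (char_poly M) x -> x%:C%C \in eigs M.
Proof. by move=> /rootP rx; rewrite mem_eigs; apply/rootP; rewrite horner_map rx rmorph0. Qed.

Lemma conj_eigs M z : z \in eigs M -> z^*%C \in eigs M.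
Proof.
rewrite !mem_eigs => /rootP rz; apply/rootP.
have <- : map_poly conjc (char_polyC M) = char_polyC M.
  by rewrite -map_poly_comp; apply: eq_map_poly => x /=; rewrite oppr0.
by rewrite horner_map rz rmorph0.
Qed.

Lemma horner_char_poly0 M : (char_poly M).[0] = \det (- M).
Proof. by rewrite horner_coef0 char_poly_det -scaleN1r detZ. Qed.

Lemma spectral_abscissa_ge M z : z \in eigs M -> complex.Re z <= spectral_abscissa M.
Proof. by move=> zM; rewrite /spectral_abscissa /= (le_bigmax_seq _ _ _ _ zM). Qed.

Lemma spectral_abscissa_lt0P M : (0 < n)%N ->
  reflect (forall z, z \in eigs M -> complex.Re z < 0) (spectral_abscissa M < 0).
Proof.
move=> n_gt0; rewrite /spectral_abscissa /=.
have head_eigs : head 0 (eigs M) \in eigs M.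
  case: (eigs M) (size_eigs M) => [sz|z s _]; last by rewrite inE eqxx.
  by rewrite -sz in n_gt0.
apply: (iffP idP) => [lt0 z zM|lt0].
  exact: le_lt_trans (spectral_abscissa_ge zM) lt0.
by rewrite big_seq bigmax_lt ?lt0.
Qed.

Lemma spectral_abscissa_lt0_detN M : spectral_abscissa M < 0 -> 0 < \det (- M).
Proof.
move=> lt0; rewrite -horner_char_poly0 monic_horner0_gt0 ?char_poly_monic // => x x_ge0.
apply/negP => /real_root_eigs /spectral_abscissa_ge /= /le_lt_trans /(_ lt0).
by rewrite ltNge x_ge0.
Qed.

Lemma detN_lt0_spectral_abscissa M : \det (- M) < 0 -> 0 < spectral_abscissa M.
Proof.
rewrite -horner_char_poly0 => p0_lt0.
have lc_gt0 : 0 < lead_coef (char_poly M) by rewrite (monicP (char_poly_monic M)).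
have [T pT] := poly_pinfty_gt_lc lc_gt0.
have [x /itvP x_in px] : exists2 x, x \in `[0, Num.max T 0] & root (char_poly M) x.
  apply: poly_ivt; first by rewrite le_max lexx orbT.
  rewrite (ltW p0_lt0) /=; apply: le_trans (ltW lc_gt0) (pT _ _).
  by rewrite le_max lexx.
apply: lt_le_trans (spectral_abscissa_ge (real_root_eigs px)) => /=.
by rewrite lt_neqAle x_in andbT; apply: contraTneq px => <-; rewrite /root (lt_eqF p0_lt0).
Qed.

Lemma spectral_abscissa_lt0_one_unstable M : (0 < n)%N -> 0 < \det (- M) ->
  (forall r, r \in eigs M -> 0 <= complex.Re r ->
     forall u, u \in rem r (eigs M) -> complex.Re u < 0) ->
  spectral_abscissa M < 0.
Proof.
(* A non-real unstable eigenvalue comes with its conjugate; a real one x >= 0 factors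
   char_poly M as q * (X - x) with q(0) > 0, so that det (- M) = - x q(0) <= 0. *)
move=> n_gt0 detN_gt0 one_unstable; apply/spectral_abscissa_lt0P => // r rM.
rewrite ltNge; apply/negP => Re_r_ge0; have rest := one_unstable r rM Re_r_ge0.
have [r_real|r_nonreal] := eqVneq r^*%C r; last first.
  have := rest _ (rem_mem (r_nonreal : r^*%C != r) (conj_eigs rM)).
  by rewrite ltNge; case: (r) Re_r_ge0 => a b /= ->.
have [x r_eq] : exists x : R, r = x%:C%C.
  exists (complex.Re r); case: r r_real {rM Re_r_ge0 rest} => a b /eqP.
  by rewrite eq_complex /= => /andP[_ /eqP b0]; congr Complex; lra.
subst r; rename Re_r_ge0 into x_ge0.
have rx : root (char_poly M) x.
  by move: rM; rewrite mem_eigs => /rootP; rewrite horner_map => /eqP; rewrite fmorph_eq0.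
have [q Mq] := factor_theorem _ _ rx.
have q_monic : q \is monic by have := char_poly_monic M; rewrite Mq monicMr ?monicXsubC.
have qC : map_poly (real_complex R) q = \prod_(u <- rem x%:C%C (eigs M)) ('X - u%:P).
  apply: (@mulIf _ ('X - (x%:C)%C%:P)); first by rewrite polyXsubC_eq0.
  have := char_polyCE M; rewrite (big_rem _ rM) /= /char_polyC Mq rmorphM /=.
  by rewrite map_polyXsubC => ->; rewrite mulrC.
have q_stable y : 0 <= y -> ~~ root q y.
  move=> y_ge0; apply/negP => /rootP qy.
  have : y%:C%C \in rem x%:C%C (eigs M).
    by rewrite -root_prod_XsubC -qC; apply/rootP; rewrite horner_map qy rmorph0.
  by move/rest; rewrite ltNge y_ge0.
have q0_gt0 := monic_horner0_gt0 q_monic q_stable.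
have : (char_poly M).[0] <= 0.
  by rewrite Mq hornerM hornerXsubC sub0r mulrN oppr_le0 mulr_ge0 // ltW.
by rewrite horner_char_poly0 leNgt detN_gt0.
Qed.

End Eigenvalues.

Section QuadraticForms.
Variables (R : realType) (n : nat).
Implicit Types (M N : 'M[R]_n) (x : 'cV[R]_n).

Local Notation sqnorm x := (\sum_i x i 0 ^+ 2).

Lemma qformE M x : qform M x = \sum_i \sum_j x i 0 * M i j * x j 0.
Proof.
rewrite /qform mxE.
under eq_bigr do rewrite mxE mulr_suml.
by rewrite exchange_big; apply: eq_bigr => i _; apply: eq_bigr => j _; rewrite mxE.
Qed.

Lemma qformD M N x : qform (M + N) x = qform M x + qform N x.
Proof. by rewrite /qform mulmxDr mulmxDl mxE. Qed.

Lemma qformZ c M x : qform (c *: M) x = c * qform M x.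
Proof. by rewrite /qform -scalemxAr -scalemxAl mxE. Qed.

Lemma qform_diag (a : 'rV[R]_n) x : qform (diag_mx a) x = \sum_i a 0 i * x i 0 ^+ 2.
Proof.
rewrite qformE; apply: eq_bigr => i _; rewrite (bigD1 i) //= big1 ?addr0.
  by rewrite mxE eqxx mulr1n; ring.
by move=> j /negPf ji; rewrite mxE eq_sym ji mulr0n mulr0 mul0r.
Qed.

Lemma qform_delta M i : qform M (delta_mx i 0) = M i i.
Proof. by rewrite /qform trmx_delta -rowE -colE !mxE. Qed.

Lemma qform_le_sqnorm M x : qform M x <= (\sum_i \sum_j `|M i j|) * sqnorm x.
Proof.
rewrite qformE mulr_suml; apply: ler_sum => i _; rewrite mulr_suml; apply: ler_sum => j _.
have sq_le k : x k 0 ^+ 2 <= sqnorm x.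
  by rewrite (bigD1 k) //= lerDl sumr_ge0 // => l _; rewrite sqr_ge0.
have xij_le : `|x i 0 * x j 0| <= sqnorm x.
  have := sq_le i; have := sq_le j; have := sqr_ge0 (x i 0 - x j 0).
  have := sqr_ge0 (x i 0 + x j 0); rewrite ler_norml; nra.
apply: le_trans (ler_norm _) _; rewrite (_ : _ * _ * _ = M i j * (x i 0 * x j 0)); last by ring.
by rewrite normrM ler_wpM2l.
Qed.

Lemma neg_def_semidef M : neg_def M -> neg_semidef M.
Proof.
move=> def x; have [->|x_neq0] := eqVneq x 0; last exact/ltW/def.
by rewrite /qform mulmx0 mxE.
Qed.

Lemma qform_eigenvector M (v : 'rV[R[i]]_n) z : v *m map_mx (real_complex R) M = z *: v ->
  let vr := map_mx (@complex.Re R) v in let vi := map_mx (@complex.Im R) v in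
  qform M vr^T + qform M vi^T = complex.Re z * (qform 1%:M vr^T + qform 1%:M vi^T).
Proof.
move=> vM vr vi; have vM_j j : \sum_i v 0 i * (M i j)%:C%C = z * v 0 j.
  have := congr1 (fun A : 'rV_n => A 0 j) vM; rewrite !mxE => <-.
  by apply: eq_bigr => i _; rewrite mxE.
have vrM : vr *m M = complex.Re z *: vr - complex.Im z *: vi.
  apply/rowP => j; transitivity (complex.Re (\sum_i v 0 i * (M i j)%:C%C)).
    rewrite (@raddf_sum _ _ (@complex.Re R : Rcomplex R -> R)) !mxE.
    by apply: eq_bigr => i _; rewrite !mxE; case: (v 0 i) => ? ? /=; ring.
  by rewrite vM_j !mxE; case: (z) (v 0 j) => ? ? [? ?] /=; ring.
have viM : vi *m M = complex.Re z *: vi + complex.Im z *: vr.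
  apply/rowP => j; transitivity (complex.Im (\sum_i v 0 i * (M i j)%:C%C)).
    rewrite (@raddf_sum _ _ (@complex.Im R : Rcomplex R -> R)) !mxE.
    by apply: eq_bigr => i _; rewrite !mxE; case: (v 0 i) => ? ? /=; ring.
  by rewrite vM_j !mxE; case: (z) (v 0 j) => ? ? [? ?] /=; ring.
rewrite /qform !trmxK !mulmx1 vrM viM !mulmxDl !mulNmx -!scalemxAl !mxE.
have -> : \sum_j vi 0 j * vr^T j 0 = \sum_j vr 0 j * vi^T j 0.
  by apply: eq_bigr => j _; rewrite !mxE mulrC.
ring.
Qed.

Lemma neg_def_eigs M : neg_def M -> forall z, z \in eigs M -> complex.Re z < 0.
Proof.
move=> def z; rewrite mem_eigs /char_polyC map_char_poly -eigenvalue_root_char.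
case/eigenvalueP => v /qform_eigenvector; set vr := map_mx _ v; set vi := map_mx _ v.
move=> key /rV0Pn[i vi_neq0].
have sq_ge0 (w : 'rV[R]_n) : 0 <= qform 1%:M w^T.
  by rewrite /qform trmxK mulmx1 mxE sumr_ge0 // => j _; rewrite mxE -expr2 sqr_ge0.
have neq0 (w : 'rV[R]_n) : w 0 i != 0 -> w^T != 0 by move=> wi; apply/cV0Pn; exists i; rewrite mxE.
have lhs_lt0 : qform M vr^T + qform M vi^T < 0.
  have semi := neg_def_semidef def.
  have : (vr 0 i != 0) || (vi 0 i != 0).
    rewrite !mxE; move: vi_neq0; case: (v 0 i) => a b /=; apply: contraNT.
    by rewrite negb_or !negbK => /andP[/eqP -> /eqP ->].
  case/orP => /neq0 /def; [have := semi vi^T | have := semi vr^T]; lra.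
rewrite ltNge; apply/negP => Re_ge0; move: lhs_lt0; rewrite key ltNge mulr_ge0 //.
by rewrite addr_ge0.
Qed.

End QuadraticForms.

Lemma quartic_eventually_le (R : realType) (I : finType) (a b : I -> R) (kb c k0 : R) :
  kb != 0 -> (forall i, b i <= 0) -> (forall i, a i * kb ^+ 2 + b i * kb ^+ 4 < 0) ->
  exists2 k, k0 < k & forall i, a i * k ^+ 2 + b i * k ^+ 4 <= - c.
Proof.
(* Take k = mu |kb| with mu >= 1: as b <= 0, a k^2 + b k^4 <= mu^2 (a kb^2 + b kb^4). *)
move=> kb_neq0 b_le0 kb_neg; pose s := kb ^+ 2; pose e i := a i * s + b i * s ^+ 2.
have s_gt0 : 0 < s by rewrite exprn_even_gt0.
have e_lt0 i : e i < 0 by rewrite /e /s -exprM; apply: kb_neg.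
have kb_gt0 : 0 < `|kb| by rewrite normr_gt0.
have term_ge0 i : 0 <= `|c| / - e i by rewrite divr_ge0 // oppr_ge0 ltW.
pose mu := 1 + `|k0| / `|kb| + \sum_i `|c| / - e i.
have sum_ge0 : 0 <= \sum_i `|c| / - e i by apply: sumr_ge0.
have mu_ge1 : 1 <= mu by rewrite /mu -addrA lerDl addr_ge0 ?divr_ge0.
have mu_e i : `|c| <= mu * - e i.
  rewrite -ler_pdivrMr ?oppr_gt0 //.
  have : `|c| / - e i <= \sum_j `|c| / - e j by rewrite (bigD1 i) //= lerDl sumr_ge0.
  have : 0 <= `|k0| / `|kb| by rewrite divr_ge0.
  rewrite /mu; lra.
exists (mu * `|kb|).
  rewrite (le_lt_trans (ler_norm k0)) // /mu !mulrDl mul1r divfK ?gt_eqF //.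
  by have := mulr_ge0 sum_ge0 (ltW kb_gt0); lra.
move=> i; have k2 : (mu * `|kb|) ^+ 2 = mu ^+ 2 * s by rewrite exprMn real_normK ?num_real.
have k4 : (mu * `|kb|) ^+ 4 = (mu ^+ 2) ^+ 2 * s ^+ 2.
  by rewrite -[4%N]/(2 * 2)%N exprM k2 exprMn.
rewrite k2 k4 (le_trans _ (_ : - `|c| <= - c)) ?lerN2 ?ler_norm //.
have mu_le : mu <= mu ^+ 2 by rewrite expr2 ler_peMl // (le_trans ler01).
have mu2_le : mu ^+ 2 <= (mu ^+ 2) ^+ 2.
  by rewrite [X in _ <= X]expr2 ler_peMl ?(le_trans ler01) // (le_trans mu_ge1).
have t1 : (mu ^+ 2) ^+ 2 * (b i * s ^+ 2) <= mu ^+ 2 * (b i * s ^+ 2).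
  by rewrite ler_wnM2r // mulr_le0_ge0 ?sqr_ge0.
have t2 : mu ^+ 2 * e i <= mu * e i by rewrite ler_wnM2r // ltW.
have := mu_e i; move: t1 t2; rewrite /e; lra.
Qed.

Lemma A2_eventually_stable (R : realType) (n : nat) (N : 'M[R]_n) (a b : 'rV[R]_n) :
  (0 < n)%N -> A2 (diag_mx a) (diag_mx b) -> forall k0 : R,
  exists2 k, k0 < k & spectral_abscissa (N + k ^+ 2 *: diag_mx a + k ^+ 4 *: diag_mx b) < 0.
Proof.
move=> n_gt0 [_ _ _ semi [kb def]] k0.
have b_le0 i : b 0 i <= 0 by have := semi (delta_mx i 0); rewrite qform_delta mxE eqxx.
have kb_neg i : a 0 i * kb ^+ 2 + b 0 i * kb ^+ 4 < 0.
  have delta_neq0 : delta_mx i 0 != 0 :> 'cV[R]_n.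
    by apply/eqP => /matrixP/(_ i 0); rewrite !mxE !eqxx => /eqP; rewrite oner_eq0.
  by have := def _ delta_neq0; rewrite qform_delta !mxE eqxx !mulr1n mulrC [b 0 i * _]mulrC.
have kb_neq0 : kb != 0.
  by apply: contraTneq (kb_neg (Ordinal n_gt0)) => ->; rewrite !expr0n !mulr0 addr0 ltxx.
pose K := \sum_i \sum_j `|N i j|.
have [k k0_lt ab_le] := quartic_eventually_le (K + 1) k0 kb_neq0 b_le0 kb_neg.
exists k => //; apply/spectral_abscissa_lt0P => //; apply: neg_def_eigs => x x_neq0.
rewrite !qformD !qformZ !qform_diag !mulr_sumr -addrA -big_split /=.
have [i xi_neq0] := cV0Pn _ x_neq0.
have S_gt0 : 0 < \sum_i x i 0 ^+ 2.
  by rewrite (bigD1 i) //= ltr_pwDl ?exprn_even_gt0 ?sumr_ge0 // => j _; rewrite sqr_ge0.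
have diag_le : \sum_i (k ^+ 2 * (a 0 i * x i 0 ^+ 2) + k ^+ 4 * (b 0 i * x i 0 ^+ 2))
    <= - (K + 1) * \sum_i x i 0 ^+ 2.
  rewrite mulr_sumr; apply: ler_sum => j _; have := ler_wpM2r (sqr_ge0 (x j 0)) (ab_le j).
  by rewrite mulrDl; lra.
have := qform_le_sqnorm N x; rewrite -/K; lra.
Qed.

Section RankOneUpdate.
Variables (R : comNzRingType) (n : nat).

Lemma det_rank1_affine (A : 'M[R]_n) (u : 'cV[R]_n) (v : 'rV[R]_n) :
  exists c, forall t, \det (A + t *: (u *m v)) = \det A + t * c.
Proof.
(* A + t u v is the Schur complement of the corner 1 in Bt t, whose first row is
   the only one depending on t. *)
pose Bt t : 'M[R]_(1 + n) := block_mx 1 (- t *: v) u A.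
have detBt t : \det (A + t *: (u *m v)) = \det (Bt t).
  have : block_mx 1 0 (- u) 1 *m Bt t = block_mx 1 (- t *: v) 0 (A + t *: (u *m v)).
    rewrite /Bt mulmx_block !mul1mx !mul0mx !mulmx1 !addr0 mulNmx addNr.
    by rewrite scaleNr mulmxN opprK scalemxAr addrC.
  move/(congr1 determinant); rewrite det_ublock det1 mul1r => <-.
  by rewrite det_mulmx det_lblock !det1 !mul1r.
exists (\det (block_mx 0 (- v) u A)) => t.
rewrite detBt (_ : \det A = \det (Bt 0)); last by rewrite -detBt scale0r addr0.
rewrite -[\det (Bt 0)]mul1r; apply: (determinant_multilinear (i0 := lshift n ord0)).
- rewrite !rowKu !row_id scale1r !scale_row_mx add_row_mx scaler0 addr0.
  by rewrite oppr0 scale0r add0r scalerN scaleNr.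
- by rewrite !row'Ku !flatmx0.
- by rewrite !row'Ku !flatmx0.
Qed.

End RankOneUpdate.

Section BoxVertices.
Variables (R : realType) (p : nat).
Implicit Types (x lo hi : 'rV[R]_p) (G : 'rV[R]_p -> R).

Definition coord_affine G :=
  forall x j, exists c, forall t, G (x + t *: delta_mx 0 j) = G x + t * c.

Lemma vertex_in_box lo hi s : (forall j, lo 0 j <= hi 0 j) -> in_box lo hi (vertex lo hi s).
Proof. by move=> lo_hi j; rewrite !mxE; case: (s j); rewrite lexx lo_hi. Qed.

Lemma snap_coord_le G lo hi y j : coord_affine G -> in_box lo hi y ->
  exists y', [/\ in_box lo hi y', y' 0 j = lo 0 j \/ y' 0 j = hi 0 j,
    forall l, l != j -> y' 0 l = y 0 l & G y' <= G y].
Proof.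
move=> G_aff y_in; have [c Gc] := G_aff y j; have /andP[lo_y y_hi] := y_in j.
pose t := (if 0 <= c then lo 0 j else hi 0 j) - y 0 j.
have yt l : (y + t *: delta_mx 0 j) 0 l = if l == j then y 0 j + t else y 0 l.
  by rewrite !mxE eqxx /=; case: eqP => [->|_]; rewrite ?mulr1 ?mulr0 ?addr0.
exists (y + t *: delta_mx 0 j); split.
- move=> l; rewrite yt; case: eqP => [->|_]; last exact: y_in.
  by rewrite addrC subrK; case: ifP => _; rewrite ?lexx (le_trans lo_y).
- by rewrite yt eqxx addrC subrK; case: ifP; [left | right].
- by move=> l /negPf l_neq; rewrite yt l_neq.
- rewrite Gc gerDl /t; case: ifP => [c_ge0|/negbT]; first by rewrite mulr_le0_ge0 // subr_le0.
  by rewrite -ltNge => c_lt0; rewrite mulr_ge0_le0 ?subr_ge0 // ltW.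
Qed.

Lemma vertex_le G lo hi x : coord_affine G -> in_box lo hi x ->
  exists s, G (vertex lo hi s) <= G x.
Proof.
move=> G_aff x_in.
suff /(_ p (leqnn p)) [y [y_in y_vertex Gy_le]] : forall l, (l <= p)%N -> exists y,
    [/\ in_box lo hi y, forall j : 'I_p, (j < l)%N -> y 0 j = lo 0 j \/ y 0 j = hi 0 j
       & G y <= G x].
  exists [ffun j => y 0 j == hi 0 j].
  suff -> : vertex lo hi [ffun j => y 0 j == hi 0 j] = y by [].
  apply/rowP => j; rewrite !mxE ffunE.
  by case: (y_vertex j (ltn_ord j)) => ->; [case: eqP | rewrite eqxx].
elim => [|l IH] l_le; first by exists x; split.
have [y [y_in y_vertex Gy_le]] := IH (ltnW l_le).
have [y' [y'_in y'_j y'_l Gy'_le]] := snap_coord_le (Ordinal l_le) G_aff y_in.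
exists y'; split => //; last exact: le_trans Gy_le.
move=> j'; rewrite ltnS leq_eqVlt; have [-> //|j'_neq] := eqVneq j' (Ordinal l_le).
rewrite y'_l // => /orP[/eqP j'_eq|/y_vertex //]; case/eqP: j'_neq; exact: val_inj.
Qed.

Lemma vertex_ge G lo hi x : coord_affine G -> in_box lo hi x ->
  exists s, G x <= G (vertex lo hi s).
Proof.
move=> G_aff x_in; have NG_aff : coord_affine (fun y => - G y).
  by move=> y j; have [c Gc] := G_aff y j; exists (- c) => t; rewrite Gc opprD mulrN.
by have [s] := vertex_le NG_aff x_in; rewrite lerN2; exists s.
Qed.

End BoxVertices.

Section SupInf.
Variable R : realType.
Implicit Types (S : set R) (x : R).

Lemma sup_eq_max S x : S x -> (forall y, S y -> y <= x) -> sup S = x.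
Proof.
move=> Sx x_ub; apply/le_anti; rewrite ge_sup //=; last by exists x.
by apply: ub_le_sup => //; exists x.
Qed.

Lemma inf_eq_min S x : S x -> (forall y, S y -> x <= y) -> inf S = x.
Proof.
move=> Sx x_lb; apply/le_anti; rewrite lb_le_inf ?andbT //=; last by exists x.
by apply: ge_inf => //; exists x.
Qed.

End SupInf.

Section SystemDeterminant.
Variables (R : realType) (n m : nat) (B : 'M[int]_(n, m)) (C : 'M[int]_(m, n)).

Lemma coord_affine_det p (A : 'rV[R]_p -> 'M[R]_n) :
  (forall x j, exists (u : 'cV[R]_n) (v : 'rV[R]_n),
     forall t, A (x + t *: delta_mx 0 j) = A x + t *: (u *m v)) ->
  coord_affine (fun x => \det (A x)).
Proof.
move=> A_rank1 x j; have [u [v Auv]] := A_rank1 x j.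
by have [c detc] := det_rank1_affine (A x) u v; exists c => t; rewrite Auv detc.
Qed.

Lemma diag_mx_delta p (x : 'rV[R]_p) j t :
  diag_mx (x + t *: delta_mx 0 j) = diag_mx x + t *: (delta_mx j (0 : 'I_1) *m delta_mx 0 j).
Proof.
rewrite linearD linearZ /= mul_delta_mx; congr (_ + _ *: _).
apply/matrixP => r c; rewrite !mxE eqxx /=.
have [<-|/negPf rc] := eqVneq r c; first by rewrite andbb mulr1n.
by rewrite mulr0n; case: eqP => // <-; rewrite eq_sym rc.
Qed.

Lemma detN_sysmx_affine_d (a b : 'rV[R]_n) (k : R) :
  coord_affine (fun d => \det (- sysmx B C d a b k)).
Proof.
apply: coord_affine_det => d j.
exists (- (intmx R B *m delta_mx j 0)), (delta_mx 0 j *m intmx R C) => t.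
rewrite mulNmx scalerN -opprD; congr (- _).
rewrite /sysmx diag_mx_delta mulmxDr mulmxDl -scalemxAr -scalemxAl !mulmxA.
by rewrite (addrAC _ (t *: _)) (addrAC _ (t *: _)).
Qed.

Lemma detN_sysmx_affine_a (d : 'rV[R]_m) (b : 'rV[R]_n) (k : R) :
  coord_affine (fun a => \det (- sysmx B C d a b k)).
Proof.
apply: coord_affine_det => a j; exists (- (k ^+ 2 *: delta_mx j 0)), (delta_mx 0 j) => t.
rewrite mulNmx scalerN -opprD; congr (- _).
rewrite /sysmx diag_mx_delta scalerDr -scalemxAl [k ^+ 2 *: (t *: _)]scalerA.
rewrite [k ^+ 2 * t]mulrC -[(t * _) *: _]scalerA.
by rewrite addrA (addrAC _ (t *: _)).
Qed.

Lemma detN_sysmx_affine_b (d : 'rV[R]_m) (a : 'rV[R]_n) (k : R) :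
  coord_affine (fun b => \det (- sysmx B C d a b k)).
Proof.
apply: coord_affine_det => b j; exists (- (k ^+ 4 *: delta_mx j 0)), (delta_mx 0 j) => t.
rewrite mulNmx scalerN -opprD; congr (- _).
rewrite /sysmx diag_mx_delta scalerDr -scalemxAl [k ^+ 4 *: (t *: _)]scalerA.
by rewrite [k ^+ 4 * t]mulrC -[(t * _) *: _]scalerA addrA.
Qed.

End SystemDeterminant.

Section UncertaintyBox.
Variables (R : realType) (n m : nat) (B : 'M[int]_(n, m)) (C : 'M[int]_(m, n)).
Variables (dlo dhi : 'rV[R]_m) (alo ahi blo bhi : 'rV[R]_n).
Hypotheses (dlo_dhi : forall j, dlo 0 j <= dhi 0 j) (alo_ahi : forall i, alo 0 i <= ahi 0 i)
  (blo_bhi : forall i, blo 0 i <= bhi 0 i).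

Definition admissible d a b := [/\ in_box dlo dhi d, in_box alo ahi a & in_box blo bhi b].

Local Notation detF k d a b := (\det (- sysmx B C d a b k)).

Definition vertex_choice := ({ffun 'I_m -> bool} * {ffun 'I_n -> bool} * {ffun 'I_n -> bool})%type.

Definition vertex_det (k : R) (s : vertex_choice) :=
  detF k (vertex dlo dhi s.1.1) (vertex alo ahi s.1.2) (vertex blo bhi s.2).

Lemma admissible_vertex (s : vertex_choice) :
  admissible (vertex dlo dhi s.1.1) (vertex alo ahi s.1.2) (vertex blo bhi s.2).
Proof. by split; apply: vertex_in_box. Qed.

Lemma vertex_det_le k d a b : admissible d a b -> exists s, vertex_det k s <= detF k d a b.
Proof.
case=> d_in a_in b_in.
have [sd le_d] := vertex_le (detN_sysmx_affine_d B C a b k) d_in.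
have [sa le_a] := vertex_le (detN_sysmx_affine_a B C (vertex dlo dhi sd) b k) a_in.
have [sb le_b] :=
  vertex_le (detN_sysmx_affine_b B C (vertex dlo dhi sd) (vertex alo ahi sa) k) b_in.
by exists (sd, sa, sb); rewrite /vertex_det /= (le_trans le_b) // (le_trans le_a).
Qed.

Lemma vertex_det_ge k d a b : admissible d a b -> exists s, detF k d a b <= vertex_det k s.
Proof.
case=> d_in a_in b_in.
have [sd le_d] := vertex_ge (detN_sysmx_affine_d B C a b k) d_in.
have [sa le_a] := vertex_ge (detN_sysmx_affine_a B C (vertex dlo dhi sd) b k) a_in.
have [sb le_b] :=
  vertex_ge (detN_sysmx_affine_b B C (vertex dlo dhi sd) (vertex alo ahi sa) k) b_in.
by exists (sd, sa, sb); rewrite /vertex_det /= (le_trans le_d) // (le_trans le_a).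
Qed.

Let s0 : vertex_choice := ([ffun=> false], [ffun=> false], [ffun=> false]).
Let vertex_min k := [arg min_(s < s0) vertex_det k s]%O.
Let vertex_max k := [arg max_(s > s0) vertex_det k s]%O.

Let vertex_min_le k d a b : admissible d a b -> vertex_det k (vertex_min k) <= detF k d a b.
Proof.
move=> dab; rewrite /vertex_min.
case: (arg_minP (vertex_det k) (isT : xpredT s0)) => s_min _ min_le.
by have [s s_le] := vertex_det_le k dab; apply: le_trans (min_le s isT) s_le.
Qed.

Let vertex_max_ge k d a b : admissible d a b -> detF k d a b <= vertex_det k (vertex_max k).
Proof.
move=> dab; rewrite /vertex_max.
case: (arg_maxP (vertex_det k) (isT : xpredT s0)) => s_max _ max_ge.
by have [s s_ge] := vertex_det_ge k dab; apply: le_trans s_ge (max_ge s isT).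
Qed.

Let Psi_minusE k : Psi_minus B C dlo dhi alo ahi blo bhi k = vertex_det k (vertex_min k).
Proof.
apply: inf_eq_min => [|_ [d [a [b [d_in a_in b_in ->]]]]]; last exact: vertex_min_le.
by have [? ? ?] := admissible_vertex (vertex_min k); do 3 eexists; split.
Qed.

Let Psi_plusE k : Psi_plus B C dlo dhi alo ahi blo bhi k = vertex_det k (vertex_max k).
Proof.
apply: sup_eq_max => [|_ [d [a [b [d_in a_in b_in ->]]]]]; last exact: vertex_max_ge.
by have [? ? ?] := admissible_vertex (vertex_max k); do 3 eexists; split.
Qed.

Lemma Psi_minus_vertex k : exists s, Psi_minus B C dlo dhi alo ahi blo bhi k = vertex_det k s.
Proof. by rewrite Psi_minusE; exists (vertex_min k). Qed.

Lemma Psi_plus_vertex k : exists s, Psi_plus B C dlo dhi alo ahi blo bhi k = vertex_det k s.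
Proof. by rewrite Psi_plusE; exists (vertex_max k). Qed.

Lemma Psi_minus_le k d a b : admissible d a b ->
  Psi_minus B C dlo dhi alo ahi blo bhi k <= detF k d a b.
Proof. by rewrite Psi_minusE; apply: vertex_min_le. Qed.

Lemma le_Psi_plus k d a b : admissible d a b ->
  detF k d a b <= Psi_plus B C dlo dhi alo ahi blo bhi k.
Proof. by rewrite Psi_plusE; apply: vertex_max_ge. Qed.

End UncertaintyBox.

Section CoefficientBounds.
Variable R : rcfType.

Definition coef_norm1 (q : {poly R}) : R := \sum_(j < size q) `|q`_j|.

Lemma coef_norm1_ge0 q : 0 <= coef_norm1 q.
Proof. exact: sumr_ge0. Qed.

Lemma horner_le_coef_norm1 q (k : R) : 0 <= k <= 1 -> `|q.[k]| <= coef_norm1 q.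
Proof.
move=> /andP[k_ge0 k_le1]; rewrite horner_coef (le_trans (ler_norm_sum _ _ _)) //.
apply: ler_sum => i _; rewrite normrM normrX ler_piMr //.
by rewrite exprn_ile1 ?normr_ge0 // ger0_norm.
Qed.

Lemma horner_sub0_le q (k : R) : 0 <= k <= 1 -> `|q.[k] - q.[0]| <= k * coef_norm1 q.
Proof.
move=> /andP[k_ge0 k_le1]; rewrite !horner_coef -sumrB (le_trans (ler_norm_sum _ _ _)) //.
rewrite mulr_sumr; apply: ler_sum => i _; rewrite -mulrBr normrM mulrC ler_wpM2r //.
case: (nat_of_ord i) => [|j]; first by rewrite !expr0 subrr normr0.
by rewrite expr0n /= subr0 ger0_norm ?exprn_ge0 // exprS ler_piMr // exprn_ile1.
Qed.

Lemma root_normc_le (p : {poly R[i]}) d r : size p = d.+1 -> p`_d = 1 -> root p r ->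
  normc r <= 1 + \sum_(i < d) normc p`_i.
Proof.
move=> size_p lead_p /rootP.
have T_ge0 : 0 <= \sum_(i < d) normc p`_i by apply: sumr_ge0 => i _; apply: normc_ge0.
have [r_le1|r_gt1] := leP (normc r) 1; first by move=> _; lra.
rewrite horner_coef size_p big_ord_recr /= lead_p mul1r addrC.
case: d size_p lead_p T_ge0 => [|d] _ _ T_ge0.
  by move=> /eqP; rewrite big_ord0 expr0 addr0 oner_eq0.
move=> /eqP; rewrite addr_eq0 => /eqP /(congr1 (@normc R)); rewrite normcN normcX => rd.
have : normc r ^+ d.+1 <= (\sum_(i < d.+1) normc p`_i) * normc r ^+ d.
  rewrite rd (le_trans (normc_sum _ _)) // mulr_suml; apply: ler_sum => i _.
  rewrite normcM normcX ler_wpM2l ?normc_ge0 // ler_eXn2l //; last by rewrite -ltnS.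
rewrite exprSr mulrC ler_pM2r ?exprn_gt0 ?(lt_trans ltr01) //; lra.
Qed.

Lemma coef_prod_XsubC_normc_le (s : seq R[i]) (rho : R) : 0 <= rho ->
  (forall z, z \in s -> normc z <= rho) ->
  forall i, normc (\prod_(z <- s) ('X - z%:P))`_i <= (1 + rho) ^+ size s.
Proof.
move=> rho_ge0; elim: s => [|z s IH] s_le i.
  by rewrite big_nil coefC expr0; case: eqP; rewrite ?normc1 ?normc0.
have z_le : normc z <= rho by apply: s_le; rewrite inE eqxx.
have {}IH j : normc (\prod_(y <- s) ('X - y%:P))`_j <= (1 + rho) ^+ size s.
  by apply: IH => y ys; apply: s_le; rewrite inE ys orbT.
rewrite big_cons mulrBl coefB coefXM coefCM /= exprS mulrDl mul1r.
apply: le_trans (normcB _ _) (lerD _ _); last by rewrite normcM ler_pM ?normc_ge0.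
by case: eqP => _; rewrite ?normc0 ?exprn_ge0 ?addr_ge0.
Qed.

End CoefficientBounds.

Section PolynomialMatrix.
Variables (R : realType) (n : nat).
Implicit Types P : 'M[{poly R}]_n.

Definition mx_eval P (k : R) : 'M[R]_n := map_mx (horner_eval k) P.

Lemma coef_char_poly_mx_eval P k i : (char_poly (mx_eval P k))`_i = ((char_poly P)`_i).[k].
Proof. by rewrite /mx_eval -map_char_poly coef_map. Qed.

Lemma detN_mx_eval P k : \det (- mx_eval P k) = (\det (- P)).[k].
Proof. by rewrite /mx_eval -map_mxN det_map_mx. Qed.

End PolynomialMatrix.

Section SimpleZeroPerturbation.
Variables (R : realType) (n : nat) (P : 'M[{poly R}]_n).
Local Notation M k := (mx_eval P k).
Local Notation c k i := ((char_poly (M k))`_i).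
Hypotheses (det0 : \det (M 0) = 0)
  (stable0 : count (fun z : R[i] => complex.Re z < 0) (eigs (M 0)) = n.-1).

Let n_gt0 : (0 < n)%N.
Proof. by case: n P det0 => // P0; rewrite det_mx00 => /eqP; rewrite oner_eq0. Qed.

Let L := \sum_(i < n.+1) coef_norm1 (char_poly P)`_i.

Let L_ge0 : 0 <= L.
Proof. by apply: sumr_ge0 => i _; apply: coef_norm1_ge0. Qed.

Let coef_norm1_le i : (i < n.+1)%N -> coef_norm1 (char_poly P)`_i <= L.
Proof.
move=> i_lt; rewrite /L (bigD1 (Ordinal i_lt)) //= lerDl.
by apply: sumr_ge0 => j _; apply: coef_norm1_ge0.
Qed.

Let coef_le k i : 0 <= k <= 1 -> (i < n.+1)%N -> `|c k i| <= L.
Proof.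
move=> k01 i_lt; rewrite coef_char_poly_mx_eval.
by rewrite (le_trans (horner_le_coef_norm1 _ k01)) ?coef_norm1_le.
Qed.

Let coef_sub_le k i : 0 <= k <= 1 -> (i < n.+1)%N -> `|c k i - c 0 i| <= k * L.
Proof.
move=> k01 i_lt; rewrite !coef_char_poly_mx_eval (le_trans (horner_sub0_le _ k01)) //.
by rewrite ler_wpM2l ?coef_norm1_le //; case/andP: k01.
Qed.

Let rho := 1 + n%:R * L.

Let eigs_le k r : 0 <= k <= 1 -> r \in eigs (M k) -> normc r <= rho.
Proof.
move=> k01; rewrite mem_eigs => root_r.
have lead : (char_polyC (M k))`_n = 1.
  have := monicP (char_poly_monic (M k)); rewrite lead_coefE size_char_poly /= => lead.
  by rewrite coef_char_polyC lead.
apply: le_trans (root_normc_le (size_char_polyC _) lead root_r) _.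
rewrite lerD2l mulr_natl -[n in _ *+ n]card_ord -sumr_const; apply: ler_sum => i _.
by rewrite coef_char_polyC normc_real coef_le // ltnS ltnW.
Qed.

Let zero_eig : 0 \in eigs (M 0).
Proof.
rewrite mem_eigs; apply/rootP; rewrite horner_map /= horner_char_poly0.
by rewrite -scaleN1r detZ det0 mulr0.
Qed.

Let t0 := rem 0 (eigs (M 0)).

Let t0_stable u : u \in t0 -> complex.Re u < 0.
Proof.
apply/allP: u; rewrite all_count count_rem stable0 zero_eig /= ltxx subn0.
by rewrite size_rem // size_eigs.
Qed.

Let q0 := \prod_(u <- t0) ('X - u%:P).

Let char_polyC_M0 : char_polyC (M 0) = 'X * q0.
Proof. by rewrite char_polyCE (big_rem 0 zero_eig) /= subr0. Qed.

Let Q0 := \prod_(u <- t0) - complex.Re u.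

Let Q0_gt0 : 0 < Q0.
Proof. by rewrite /Q0 big_seq prodr_gt0 // => u /t0_stable; rewrite oppr_gt0. Qed.

Let q0_ge w : 0 <= complex.Re w -> Q0 <= normc q0.[w].
Proof.
move=> Re_w_ge0; rewrite horner_prod normc_prod /Q0 !big_seq.
apply: ler_prod => u /t0_stable Re_u_lt0.
rewrite hornerXsubC oppr_ge0 ltW //=; apply: le_trans (Re_le_normc _).
by case: (w) (u) Re_w_ge0 => ? ? [? ?] /=; lra.
Qed.

(* Near k = 0 the eigenvalues of M k in the closed right half-plane are O(k), since
   char_polyC (M 0) = X q0 with q0 bounded below there.  Two of them would make the
   coefficient of X in char_poly (M k) O(k), whereas it tends to - q0(0) != 0. *)
Let K1 := (n.+1)%:R * L * rho ^+ n / Q0.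

Let rho_ge1 : 1 <= rho.
Proof. by rewrite /rho lerDl mulr_ge0. Qed.

Let unstable_eig_le k r : 0 <= k <= 1 -> r \in eigs (M k) -> 0 <= complex.Re r ->
  normc r <= k * K1.
Proof.
move=> k01 r_eig Re_r_ge0; have r_le := eigs_le k01 r_eig.
have : normc (char_polyC (M 0)).[r] <= \sum_(i < n.+1) k * L * rho ^+ n.
  have /rootP rk : root (char_polyC (M k)) r by rewrite -mem_eigs.
  rewrite -[X in normc X](subr0) -rk !horner_coef !size_char_polyC -sumrB.
  apply: (le_trans (normc_sum _ _)); apply: ler_sum => i _.
  rewrite -mulrBl normcM normcX !coef_char_polyC -raddfB normc_real distrC.
  apply: ler_pM; rewrite ?normr_ge0 ?exprn_ge0 ?normc_ge0 ?coef_sub_le //.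
  rewrite (le_trans (lerXn2r _ _ _ r_le)) ?nnegrE ?normc_ge0 ?(le_trans ler01) //.
  by apply: ler_weXn2l => //; rewrite -ltnS.
rewrite sumr_const card_ord -mulr_natl char_polyC_M0 hornerM hornerX normcM => le.
rewrite -(ler_pM2r Q0_gt0) (le_trans (ler_wpM2l (normc_ge0 _) (q0_ge Re_r_ge0))) //.
suff -> : k * K1 * Q0 = (n.+1)%:R * (k * L * rho ^+ n) by [].
by rewrite /K1; field; rewrite gt_eqF.
Qed.

Let G := (1 + rho) ^+ n.

Let G_ge0 : 0 <= G.
Proof. by rewrite exprn_ge0 // addr_ge0 // (le_trans ler01). Qed.

Let coef1_ge k : 0 <= k <= 1 -> Q0 - k * L <= `|c k 1|.
Proof.
move=> k01; have c01 : Q0 <= `|c 0 1|.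
  rewrite -normc_real -coef_char_polyC char_polyC_M0 coefXM /= -horner_coef0.
  by apply: q0_ge; rewrite lexx.
have := coef_sub_le k01 (_ : 1 < n.+1)%N; rewrite ltnS => /(_ n_gt0).
have := lerB_dist (c 0 1) (c k 1); rewrite distrC; lra.
Qed.

Let coef1_le k r1 r2 e : 0 <= k <= 1 -> r1 \in eigs (M k) -> r2 \in rem r1 (eigs (M k)) ->
  normc r1 <= e -> normc r2 <= e -> e <= 1 -> `|c k 1| <= 3 * e * G.
Proof.
move=> k01 r1_eig r2_rem r1_le r2_le e_le1.
pose g := \prod_(u <- rem r2 (rem r1 (eigs (M k)))) ('X - u%:P).
have g_le i : normc g`_i <= G.
  apply: le_trans (coef_prod_XsubC_normc_le _ _ i) _.
  - by apply: le_trans (eigs_le k01 r1_eig); apply: normc_ge0.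
  - by move=> u /mem_rem /mem_rem; apply: eigs_le.
  apply: ler_weXn2l; first by rewrite lerDl (le_trans ler01).
  by rewrite size_rem // size_rem // size_eigs (leq_trans (leq_pred _) (leq_pred _)).
have c1 : (char_polyC (M k))`_1 = - r2 * g`_0 - r1 * (g`_0 - r2 * g`_1).
  rewrite char_polyCE (big_rem r1 r1_eig) (big_rem r2 r2_rem) /= -/g.
  by rewrite !(mulrBl, coefB, coefXM, coefCM) /=; ring.
rewrite -normc_real -coef_char_polyC c1.
apply: le_trans (normcB _ _) _; rewrite !normcM normcN.
apply: le_trans (lerD (lexx _) (ler_wpM2l (normc_ge0 _) (normcB _ _))) _; rewrite normcM.
have bx : normc r2 * normc g`_0 <= e * G by rewrite ler_pM ?normc_ge0.
have ax : normc r1 * normc g`_0 <= e * G by rewrite ler_pM ?normc_ge0.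
have aby : normc r1 * (normc r2 * normc g`_1) <= e * G.
  rewrite ler_pM ?mulr_ge0 ?normc_ge0 // -[G]mul1r ler_pM ?normc_ge0 //.
  exact: le_trans r2_le e_le1.
rewrite mulrDr; lra.
Qed.

Lemma simple_zero_perturbation : exists2 del : R, 0 < del &
  forall k, 0 < k < del -> 0 < \det (- M k) -> spectral_abscissa (M k) < 0.
Proof.
have K1_ge0 : 0 <= K1.
  by rewrite /K1 divr_ge0 ?mulr_ge0 ?exprn_ge0 ?ler0n ?(le_trans ler01 rho_ge1) // ltW.
pose W := 3 * K1 * G + L + 1.
have W_gt0 : 0 < W.
  by rewrite /W; have := mulr_ge0 (mulr_ge0 (ler0n _ 3) K1_ge0) G_ge0; have := L_ge0; lra.
exists (Num.min 1 (Num.min (1 / (K1 + 1)) (Q0 / W))).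
  by rewrite !lt_min ltr01 !divr_gt0 //; lra.
move=> k /andP[k_gt0]; rewrite !lt_min => /and3P[k_lt1 kK1 kQ0] detN_gt0.
have k01 : 0 <= k <= 1 by rewrite !ltW.
have kK1_le1 : k * K1 <= 1.
  by move: kK1; rewrite ltr_pdivlMr ?mul1r; lra.
have kW : k * (3 * K1 * G + L) < Q0.
  move: kQ0; rewrite ltr_pdivlMr // /W => lt; apply: le_lt_trans lt.
  by rewrite ler_wpM2l ?ltW //; lra.
apply: spectral_abscissa_lt0_one_unstable => // r1 r1_eig Re_r1 u u_rem.
rewrite ltNge; apply/negP => Re_u.
have := coef1_le k01 r1_eig u_rem (unstable_eig_le k01 r1_eig Re_r1)
  (unstable_eig_le k01 (mem_rem u_rem) Re_u) kK1_le1.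
have := coef1_ge k01; have := mulr_ge0 K1_ge0 G_ge0; nra.
Qed.

End SimpleZeroPerturbation.

Lemma poly_sign_near0 (R : rcfType) (q : {poly R}) : exists2 h : R, 0 < h &
  (forall y, 0 < y < h -> 0 < q.[y]) \/ (forall y, 0 < y < h -> q.[y] <= 0).
Proof.
have [->|q_neq0] := eqVneq q 0; first by exists 1 => //; right => y _; rewrite horner0.
exists (next_root q 0 1); first exact: next_root_gt.
have sg_q y : 0 < y < next_root q 0 1 -> Num.sg q.[y] = sgp_right q 0.
  by move=> y_in; apply: (@sgr_neighpr R 1); rewrite /neighpr in_itv.
have [sg1|sg_neq1] := eqVneq (sgp_right q 0) 1.
  by left => y /sg_q; rewrite sg1 => /eqP; rewrite sgr_cp0.
right => y /sg_q sg_qy; rewrite leNgt; apply: contraNN sg_neq1 => q_gt0.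
by rewrite -sg_qy gtr0_sg.
Qed.

Lemma initially_positive_le (R : realType) (f g : R -> R) :
  initially_positive f -> (forall k, 0 < k -> f k <= g k) -> initially_positive g.
Proof.
move=> [h [h_gt0 f_gt0]] f_le; exists h; split => // k k_in.
by apply: lt_le_trans (f_gt0 k k_in) (f_le k _); case/andP: k_in.
Qed.

Lemma neg_sign_change_lt0 (R : realType) (f : R -> R) :
  neg_sign_change f -> exists2 k, 0 < k & f k < 0.
Proof. by move=> [k1 [k2 [k1_ge0 k12 _ f_lt0]]]; exists k2 => //; apply: le_lt_trans k12. Qed.

Section Microphase.
Variables (R : realType) (n m : nat) (B : 'M[int]_(n, m)) (C : 'M[int]_(m, n)).

Definition sysmx_poly (d : 'rV[R]_m) (a b : 'rV[R]_n) : 'M[{poly R}]_n :=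
  map_mx polyC (intmx R B *m diag_mx d *m intmx R C)
  + 'X^2 *: map_mx polyC (diag_mx a) + 'X^4 *: map_mx polyC (diag_mx b).

Lemma mx_eval_sysmx_poly d a b k : mx_eval (sysmx_poly d a b) k = sysmx B C d a b k.
Proof. by apply/matrixP => i j; rewrite !mxE /= horner_evalE !hornerE. Qed.

Lemma microphase_of_det_sign d a b :
  let N := intmx R B *m diag_mx d *m intmx R C in
  \det N = 0 -> count (fun z : R[i] => complex.Re z < 0) (eigs N) = n.-1 ->
  A2 (diag_mx a) (diag_mx b) ->
  initially_positive (fun k => \det (- sysmx B C d a b k)) ->
  (exists2 k2, 0 < k2 & \det (- sysmx B C d a b k2) < 0) ->
  microphase B C d a b.
Proof.
move=> N detN countN A2ab [kh [kh_gt0 det_gt0]] [k2 k2_gt0 det_k2].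
have eval0 : mx_eval (sysmx_poly d a b) 0 = N.
  by rewrite mx_eval_sysmx_poly /sysmx !expr0n /= !scale0r !addr0.
have n_gt0 : (0 < n)%N.
  by case: n N detN {countN A2ab eval0} => // ?; rewrite det_mx00 => /eqP; rewrite oner_eq0.
have [del del_gt0 small_stable] : exists2 del : R, 0 < del & forall k, 0 < k < del ->
    0 < \det (- mx_eval (sysmx_poly d a b) k) ->
    spectral_abscissa (mx_eval (sysmx_poly d a b) k) < 0.
  by apply: simple_zero_perturbation; rewrite eval0.
have [k3 k23 large_stable] := A2_eventually_stable N n_gt0 A2ab k2.
exists (Num.min kh (Num.min del (k2 / 2))); split; first by rewrite !lt_min kh_gt0 del_gt0 divr_gt0.
split.
  move=> k /andP[k_gt0]; rewrite !lt_min => /and3P[k_kh k_del _].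
  rewrite /rho -mx_eval_sysmx_poly small_stable ?k_gt0 //.
  by rewrite mx_eval_sysmx_poly det_gt0 ?k_gt0.
exists k2, k3; split => //; last exact: detN_lt0_spectral_abscissa.
by rewrite !gt_min ltr_pdivrMr // ltr_pMr // ltr1n !orbT.
Qed.

End Microphase.

Section UncertainSystem.
Variables (R : realType) (n m : nat) (B : 'M[int]_(n, m)) (C : 'M[int]_(m, n)).
Variables (dlo dhi : 'rV[R]_m) (alo ahi blo bhi : 'rV[R]_n).
Hypotheses (dlo_dhi : forall j, dlo 0 j <= dhi 0 j) (alo_ahi : forall i, alo 0 i <= ahi 0 i)
  (blo_bhi : forall i, blo 0 i <= bhi 0 i).
Hypothesis A1_box : forall d : 'rV[R]_m, in_box dlo dhi d ->
  \det (intmx R B *m diag_mx d *m intmx R C) = 0 /\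
  count (fun z : R[i] => complex.Re z < 0) (eigs (intmx R B *m diag_mx d *m intmx R C)) = n.-1.
Hypothesis A2_box : forall a b : 'rV[R]_n, in_box alo ahi a -> in_box blo bhi b ->
  A2 (diag_mx a) (diag_mx b).
Local Notation vdet := (vertex_det B C dlo dhi alo ahi blo bhi).
Local Notation adm := (admissible dlo dhi alo ahi blo bhi).

Lemma admissible_microphase d a b : adm d a b ->
  initially_positive (fun k => \det (- sysmx B C d a b k)) ->
  (exists2 k2, 0 < k2 & \det (- sysmx B C d a b k2) < 0) -> microphase B C d a b.
Proof.
case=> d_in a_in b_in; have [? ?] := A1_box d_in.
by apply: microphase_of_det_sign; last exact: A2_box.
Qed.

Lemma vertex_microphase s :
  initially_positive (vdet ^~ s) -> (exists2 k2, 0 < k2 & vdet k2 s < 0) ->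
  exists d a b, adm d a b /\ microphase B C d a b.
Proof.
move=> pos neg; exists (vertex dlo dhi s.1.1), (vertex alo ahi s.1.2), (vertex blo bhi s.2).
have s_adm := admissible_vertex dlo_dhi alo_ahi blo_bhi s.
by split; last exact: admissible_microphase.
Qed.

Lemma Psi_plus_initially_positive :
  initially_positive (Psi_plus B C dlo dhi alo ahi blo bhi) ->
  exists s, initially_positive (vdet ^~ s).
Proof.
(* Each vertex determinant is a polynomial in k, so all of them have constant signs on
   a common interval (0, h); at any k there, Psi_plus is one of them. *)
move=> [kh [kh_gt0 Psi_gt0]].
pose q s := \det (- sysmx_poly B C (vertex dlo dhi s.1.1) (vertex alo ahi s.1.2)
                                 (vertex blo bhi s.2)).
have vdetE k s : vdet k s = (q s).[k] by rewrite -detN_mx_eval mx_eval_sysmx_poly.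
have /fin_all_exists2 [hs hs_gt0 hs_sign] := fun s => poly_sign_near0 (q s).
pose h := Num.min kh (\big[Num.min/1]_s hs s).
have h_gt0 : 0 < h by rewrite lt_min kh_gt0; apply/bigmin_gtP; split => //= s _; apply: hs_gt0.
have h_le s : h <= hs s by rewrite ge_min (bigmin_le _ s) orbT.
have y_in : 0 < h / 2 < h by rewrite divr_gt0 //= ltr_pdivrMr // ltr_pMr // ltr1n.
have y_kh : 0 < h / 2 < kh by case/andP: y_in => -> /lt_le_trans; apply; rewrite ge_min lexx.
have [s Psi_s] := Psi_plus_vertex B C dlo_dhi alo_ahi blo_bhi (h / 2).
have := Psi_gt0 _ y_kh; rewrite Psi_s vdetE => qs_gt0.
exists s; exists h; split => // k k_in; rewrite vdetE.
have [pos|nonpos] := hs_sign s.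
  by apply: pos; case/andP: k_in => -> /lt_le_trans; apply.
by move: qs_gt0; rewrite ltNge nonpos //; case/andP: y_in => -> /lt_le_trans; apply.
Qed.

End UncertainSystem.

Unset Implicit Arguments.
Set Strict Implicit.

Theorem corollary1 (R : realType) (n m : nat)
  (B : 'M[int]_(n, m)) (C : 'M[int]_(m, n))
  (dlo dhi : 'rV[R]_m) (alo ahi blo bhi : 'rV[R]_n) :
  (0 < n)%N -> (0 < m)%N ->
  (* the box D *)
  (forall j, 0 <= dlo ord0 j /\ dlo ord0 j <= dhi ord0 j) ->
  (* the box J (finite intervals) *)
  (forall i, alo ord0 i <= ahi ord0 i /\ blo ord0 i <= bhi ord0 i) ->
  (* Assumption (A1) *)
  (forall d : 'rV[R]_m, in_box dlo dhi d ->
     \det (intmx R B *m diag_mx d *m intmx R C) = 0 /\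
     count (fun z : R[i] => complex.Re z < 0)
           (eigs (intmx R B *m diag_mx d *m intmx R C)) = n.-1) ->
  (exists v : 'rV[R]_n, v != 0 /\ (forall i, 0 <= v ord0 i) /\
     v *m intmx R B = 0) ->
  (* Assumption (A2) for every admissible pair (J2, J4) *)
  (forall a b : 'rV[R]_n, in_box alo ahi a -> in_box blo bhi b ->
     A2 (diag_mx a) (diag_mx b)) ->
  let PsiM := Psi_minus B C dlo dhi alo ahi blo bhi in
  let PsiP := Psi_plus B C dlo dhi alo ahi blo bhi in
  let adm d a b := [/\ in_box dlo dhi d, in_box alo ahi a & in_box blo bhi b] in
  (* (i) *)
  [/\ (exists d a b, adm d a b /\ microphase B C d a b) ->
        initially_positive PsiP,
  (* (ii) *)
      (initially_positive PsiM /\ neg_sign_change PsiM) \/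
      (initially_positive PsiP /\ neg_sign_change PsiP) ->
        exists d a b, adm d a b /\ microphase B C d a b,
  (* (iii) *)
      initially_positive PsiM -> neg_sign_change PsiP ->
        forall d a b, adm d a b -> microphase B C d a b
  & (* (iv) *)
      forall k : R, 0 <= k ->
      let f sd sa sb := \det (- sysmx B C (vertex dlo dhi sd)
                                (vertex alo ahi sa) (vertex blo bhi sb) k) in
      ((exists sd sa sb, PsiM k = f sd sa sb) /\
       (forall sd sa sb, PsiM k <= f sd sa sb)) /\
      ((exists sd sa sb, PsiP k = f sd sa sb) /\
       (forall sd sa sb, f sd sa sb <= PsiP k))].
Proof.
move=> _ _ D_box J_box A1 _ A2_box PsiM PsiP adm.
have dlo_dhi j : dlo 0 j <= dhi 0 j by case: (D_box j).
have alo_ahi i : alo 0 i <= ahi 0 i by case: (J_box i).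
have blo_bhi i : blo 0 i <= bhi 0 i by case: (J_box i).
have vertex_adm := admissible_vertex dlo_dhi alo_ahi blo_bhi.
have PsiM_le k := Psi_minus_le B C dlo_dhi alo_ahi blo_bhi k.
have le_PsiP k := le_Psi_plus B C dlo_dhi alo_ahi blo_bhi k.
have PsiM_vertex k := Psi_minus_vertex B C dlo_dhi alo_ahi blo_bhi k.
have PsiP_vertex k := Psi_plus_vertex B C dlo_dhi alo_ahi blo_bhi k.
have micro := admissible_microphase A1 A2_box.
have vertex_micro := vertex_microphase dlo_dhi alo_ahi blo_bhi A1 A2_box.
split.
- move=> [d [a [b [dab [kh [kh_gt0 [stable _]]]]]]]; exists kh; split => // k k_in.
  exact: lt_le_trans (spectral_abscissa_lt0_detN (stable k k_in)) (le_PsiP k _ _ _ dab).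
- case=> -[Psi_pos /neg_sign_change_lt0 [k2 k2_gt0 Psi_k2]].
  + have [s Psi_s] := PsiM_vertex k2; rewrite /PsiM Psi_s in Psi_k2.
    apply: (vertex_micro s); last by exists k2.
    by apply: initially_positive_le Psi_pos _ => k _; apply/PsiM_le/vertex_adm.
  + have [s s_pos] := Psi_plus_initially_positive dlo_dhi alo_ahi blo_bhi Psi_pos.
    apply: (vertex_micro s s_pos); exists k2 => //.
    exact: le_lt_trans (le_PsiP _ _ _ _ (vertex_adm s)) Psi_k2.
- move=> PsiM_pos /neg_sign_change_lt0 [k2 k2_gt0 PsiP_k2] d a b dab; apply: micro => //.
    by apply: initially_positive_le PsiM_pos _ => k _; apply: PsiM_le.
  by exists k2 => //; apply: le_lt_trans (le_PsiP _ _ _ _ dab) PsiP_k2.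
- move=> k _ f; rewrite /PsiM /PsiP; split; split.
  + by have [[[sd sa] sb] ->] := PsiM_vertex k; exists sd, sa, sb.
  + by move=> sd sa sb; apply: PsiM_le (vertex_adm (sd, sa, sb)).
  + by have [[[sd sa] sb] ->] := PsiP_vertex k; exists sd, sa, sb.
  + by move=> sd sa sb; apply: le_PsiP (vertex_adm (sd, sa, sb)).
Qed.
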